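(* Let $v\in\tilde{\mathcal{X}}^1$. Then $\inf_{x\in\mathbb{R}}|v(x)|\le\frac{E(v)}{\sqrt2\,|p(v)|}$ (the right-hand side being $+\infty$ if $p(v)=0$). In particular, if $\delta(v)=1-\frac{E(v)}{\sqrt2|p(v)|}>0$, then for every $0<\delta<\delta(v)$ there exists $x_\delta\in\mathbb{R}$ with $1-|v(x_\delta)|\ge\delta$.
   Context: $\mathcal{X}^1=\{w\in L^\infty(\mathbb{R};\mathbb{C}):\ w'\in L^2,\ 1-|w|^2\in L^2\}$; $\tilde{\mathcal{X}}^1=\{v\in\mathcal{X}^1:\ |v(x)|>0\ \forall x\}$. $E(v)=\frac12\int|v'|^2+\frac14\int(1-|v|^2)^2$. For $v\in\tilde{\mathcal{X}}^1$ write $v=\varrho e^{i\varphi}$ with $\varrho=|v|$ and $\varphi$ a continuous real phase; $p(v)=\frac12\int_\mathbb{R}(\varrho^2-1)\varphi'$. *)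

From HB Require Import structures.
From mathcomp Require Import all_boot all_order all_algebra.
From mathcomp Require Import all_classical all_reals all_analysis.
Set Implicit Arguments. Unset Strict Implicit. Unset Printing Implicit Defensive.
Import Order.TTheory GRing.Theory Num.Theory numFieldNormedType.Exports.
Local Open Scope classical_set_scope.
Local Open Scope ring_scope.

Section GP.
Variable R : realType.
Notation leb := (@lebesgue_measure R).

Definition L2fun (f : R -> R) : Prop :=
  measurable_fun setT f /\ leb.-integrable setT (fun x => (f x ^+ 2)%:E).

(* g is the (weak) derivative of u on R: g locally integrable and
   u b - u a = ∫_a^b g for all a <= b (1-d characterization of W^{1,1}_loc). *)
Definition weak_deriv (u g : R -> R) : Prop :=
  (forall a b : R, a <= b -> leb.-integrable `[a, b] (fun x => (g x)%:E)) /\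
  (forall a b : R, a <= b -> Rintegral leb `[a, b] g = u b - u a).

(* v = u1 + i u2 *)
Definition modv (u1 u2 : R -> R) (x : R) : R := Num.sqrt (u1 x ^+ 2 + u2 x ^+ 2).

(* v ∈ X^1 with weak derivative v' = g1 + i g2 *)
Definition in_X1 (u1 u2 g1 g2 : R -> R) : Prop :=
  (exists M : R, forall x, modv u1 u2 x <= M) /\
  weak_deriv u1 g1 /\ weak_deriv u2 g2 /\ L2fun g1 /\ L2fun g2 /\
  L2fun (fun x => 1 - modv u1 u2 x ^+ 2).

Definition in_tX1 (u1 u2 g1 g2 : R -> R) : Prop :=
  in_X1 u1 u2 g1 g2 /\ forall x, 0 < modv u1 u2 x.

Definition energy (u1 u2 g1 g2 : R -> R) : R :=
  2^-1 * Rintegral leb setT (fun x => g1 x ^+ 2 + g2 x ^+ 2)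
  + 4^-1 * Rintegral leb setT (fun x => (1 - modv u1 u2 x ^+ 2) ^+ 2).

Definition is_phase (u1 u2 phi : R -> R) : Prop :=
  continuous phi /\
  forall x, u1 x = modv u1 u2 x * cos (phi x) /\ u2 x = modv u1 u2 x * sin (phi x).

Definition momentum (u1 u2 dphi : R -> R) : R :=
  2^-1 * Rintegral leb setT (fun x => (modv u1 u2 x ^+ 2 - 1) * dphi x).

End GP.

From HB Require Import structures.
From mathcomp Require Import all_boot all_order all_algebra.
From mathcomp Require Import all_classical all_reals all_analysis.
From mathcomp Require Import measurable_realfun ring lra.
Import Order.TTheory GRing.Theory Num.Theory numFieldNormedType.Exports.
Local Open Scope classical_set_scope.
Local Open Scope ring_scope.

(* The momentum density (|v|^2 - 1) phi' is controlled by the energy density.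
   Differentiating u1 sin phi - u2 cos phi = 0 gives |v| phi' = cos phi u2' - sin phi u1',
   hence |v| |phi'| <= |v'|, and by AM-GM
     inf|v| |(|v|^2 - 1) phi'| <= |v'| |1 - |v|^2| <= sqrt 2 (|v'|^2/2 + (1 - |v|^2)^2/4).
   Integrating gives inf|v| * sqrt 2 |p(v)| <= E(v).  Since u1, u2 and phi are only
   weakly differentiable, the pointwise bound is used at the Lebesgue points of their
   weak derivatives, where these are classical derivatives. *)

Lemma ae_le_normr_Rintegral {d} {T : measurableType d} {R : realType}
    {mu : {measure set T -> \bar R}} {D : set T} {f h : T -> R} :
  measurable D -> measurable_fun D f -> mu.-integrable D (EFin \o h) ->
  (forall x, D x -> 0 <= h x) -> {ae mu, forall x, D x -> `|f x| <= h x} ->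
  `|Rintegral mu D f| <= Rintegral mu D h.
Proof.
move=> mD mf ih h0 fh.
have le_int : (\int[mu]_(x in D) `|f x|%:E <= \int[mu]_(x in D) (h x)%:E)%E.
  apply: ae_ge0_le_integral => //.
  - by apply/measurable_EFinP; exact: measurableT_comp.
  - by case/integrableP: ih.
have lt_int := le_lt_trans le_int (integrable_lty mD ih).
have intf : mu.-integrable D (EFin \o f).
  by apply/integrableP; split; first exact/measurable_EFinP.
apply: le_trans (le_normr_Rintegral mD intf) _.
apply: fine_le => //; rewrite ?inE.
- by rewrite ge0_fin_numE // integral_ge0.
- exact: (integrable_fin_num mD ih).
Qed.

Lemma weak_deriv_is_derive {R : realType} {u g : R -> R} {x : R} :
  weak_deriv u g -> lebesgue_pt g x -> is_derive x 1 u (g x).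
Proof.
move=> [ig eq] lp.
have lt_x1 : x < x + 1 by lra.
have le_x1 : x - 1 <= x + 1 by lra.
have /(_ _ lp) [] := @FTC1_lebesgue_pt R g (BLeft (x - 1)) x (x + 1) lt_x1 (ig _ _ le_x1).
  by rewrite /Order.lt /=; lra.
set F := (fun y : R => _ : R) => dF F'.
pose c := u (x - 1).
have uE : \near x, F x + c = u x.
  apply/nbhs_ballP; exists 1 => //= y /= hy.
  have hy' : x - 1 <= y by move: hy; rewrite /ball /= ltr_distlC => /andP[/ltW].
  by rewrite /F /= eq // subrK.
apply: near_eq_is_derive uE _.
rewrite -F' derive1E -[X in is_derive _ _ _ X]addr0.
by apply: is_deriveD; exact: derivableP.
Qed.

Lemma weak_deriv_measurable {R : realType} {u g : R -> R} :
  weak_deriv u g -> measurable_fun [set: R] g.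
Proof.
move=> [ig _]; rewrite -(bigcup_itvT true false).
apply/measurable_fun_bigcup => [n|n]; first exact: measurable_itv.
have le_Nnn : - n%:R <= n%:R :> R by have := ler0n R n; lra.
by have /integrableP[/measurable_EFinP] := ig _ _ le_Nnn.
Qed.

Lemma weak_deriv_locally_integrable {R : realType} {u g : R -> R} :
  weak_deriv u g -> locally_integrable [set: R] g.
Proof.
move=> wd; split; [exact: weak_deriv_measurable wd | exact: openT |].
move=> K _ cK.
have [M0 [_ KM0]] := compact_bounded cK; pose M := `|M0| + 1.
have lt_M0M : M0 < M by rewrite /M; have := ler_norm M0; lra.
have KM : K `<=` `[- M, M].
  by move=> x /(KM0 _ lt_M0M) /=; rewrite in_itv /= -ler_norml.
have le_NMM : - M <= M by have := normr_ge0 M0; rewrite /M; lra.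
have /integrableP [mg fin] := wd.1 _ _ le_NMM.
apply: le_lt_trans fin; apply: ge0_subset_integral => //.
- exact: compact_measurable.
- by apply/measurable_EFinP; apply: measurableT_comp => //; exact/measurable_EFinP.
Qed.

Lemma weak_deriv_ae_is_derive {R : realType} {u g : R -> R} :
  weak_deriv u g -> {ae @lebesgue_measure R, forall x : R, is_derive x (1 : R) u (g x)}.
Proof.
move=> wd.
have := lebesgue_differentiation (weak_deriv_locally_integrable wd).
apply: filterS; first exact: (ae_filter_ringOfSetsType (@lebesgue_measure R)).
by move=> x; exact: weak_deriv_is_derive.
Qed.

Lemma mul_le_sqrt2 {R : rcfType} (a b : R) :
  a * b <= Num.sqrt 2 * (2^-1 * a ^+ 2 + 4^-1 * b ^+ 2).
Proof.
set s := Num.sqrt 2; have ss : s * s = 2 by rewrite -expr2 sqr_sqrtr ?ler0n.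
rewrite -subr_ge0.
have -> : s * (2^-1 * a ^+ 2 + 4^-1 * b ^+ 2) - a * b = 4^-1 * (s * (s * a - b) ^+ 2).
  have -> : s * (s * a - b) ^+ 2 = (s * s) * s * a ^+ 2 - 2 * (s * s) * (a * b) + s * b ^+ 2.
    by ring.
  by rewrite ss; field.
by rewrite mulr_ge0 ?invr_ge0 ?ler0n // mulr_ge0 ?sqrtr_ge0 ?sqr_ge0.
Qed.

Lemma momentum_density_le {R : rcfType} {m r d G : R} :
  0 <= m -> m <= r -> (r * d) ^+ 2 <= G ->
  m * `|(r ^+ 2 - 1) * d| <= Num.sqrt 2 * (2^-1 * G + 4^-1 * (1 - r ^+ 2) ^+ 2).
Proof.
move=> m_ge0 le_mr rd_le.
have r_ge0 : 0 <= r := le_trans m_ge0 le_mr.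
have le_prod : m * `|(r ^+ 2 - 1) * d| <= `|r * d| * `|1 - r ^+ 2|.
  rewrite normrM (distrC _ 1) normrM (ger0_norm r_ge0) [leRHS]mulrAC -mulrA.
  by rewrite ler_wpM2r ?mulr_ge0.
apply: (le_trans le_prod); apply: (le_trans (mul_le_sqrt2 _ _)).
apply: ler_wpM2l; first exact: sqrtr_ge0.
rewrite !real_normK ?num_real // lerD2r.
by apply: ler_wpM2l; rewrite ?invr_ge0 ?ler0n.
Qed.

Lemma modv_deriv_phase_sqr_le {R : realType} {u1 u2 g1 g2 phi dphi : R -> R} {x : R} :
  is_phase u1 u2 phi -> is_derive x (1 : R) u1 (g1 x) ->
  is_derive x (1 : R) u2 (g2 x) -> is_derive x (1 : R) phi (dphi x) ->
  (modv u1 u2 x * dphi x) ^+ 2 <= g1 x ^+ 2 + g2 x ^+ 2.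
Proof.
move=> [_ polar] d1 d2 dp.
have ds : is_derive x 1 (sin \o phi) (cos (phi x) * dphi x) by exact: is_derive1_comp.
have dc : is_derive x 1 (cos \o phi) (- sin (phi x) * dphi x) by exact: is_derive1_comp.
have cross0 : u1 * (sin \o phi) - u2 * (cos \o phi) = cst 0.
  by apply/funext => t /=; rewrite !fctE /=; have [-> ->] := polar t; ring.
have d_cross := is_deriveB (is_deriveM d1 ds) (is_deriveM d2 dc).
have := @derive_val _ _ _ _ _ _ _ d_cross.
rewrite cross0 derive_cst /= /GRing.scale /=.
have [-> ->] := polar x.
set r := modv u1 u2 x; set c := cos (phi x); set s := sin (phi x) => deriv0.
have cs : c ^+ 2 + s ^+ 2 = 1 := cos2Dsin2 (phi x).
have -> : r * dphi x = c * g2 x - s * g1 x.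
  rewrite -[LHS]mulr1 -cs; apply/eqP; rewrite -subr_eq0 deriv0; apply/eqP; ring.
have : (c * g2 x - s * g1 x) ^+ 2 + (c * g1 x + s * g2 x) ^+ 2
    = (c ^+ 2 + s ^+ 2) * (g1 x ^+ 2 + g2 x ^+ 2) by ring.
by rewrite cs mul1r => <-; rewrite lerDl sqr_ge0.
Qed.

Definition energy_density {R : realType} (u1 u2 g1 g2 : R -> R) (x : R) : R :=
  2^-1 * (g1 x ^+ 2 + g2 x ^+ 2) + 4^-1 * (1 - modv u1 u2 x ^+ 2) ^+ 2.

Definition momentum_density {R : realType} (u1 u2 dphi : R -> R) (x : R) : R :=
  (modv u1 u2 x ^+ 2 - 1) * dphi x.

Lemma energy_density_ge0 {R : realType} (u1 u2 g1 g2 : R -> R) (x : R) :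
  0 <= energy_density u1 u2 g1 g2 x.
Proof. by rewrite addr_ge0 // mulr_ge0 ?invr_ge0 ?ler0n ?addr_ge0 ?sqr_ge0. Qed.

Section energy_momentum.
Variables (R : realType) (u1 u2 g1 g2 phi dphi : R -> R).
Hypotheses (v_X1 : in_X1 u1 u2 g1 g2) (v_phase : is_phase u1 u2 phi).
Hypothesis dphi_weak_deriv : weak_deriv phi dphi.
Local Notation mu := (@lebesgue_measure R).
Local Notation e := (energy_density u1 u2 g1 g2).
Local Notation j := (momentum_density u1 u2 dphi).

Let g_sqr_integrable : mu.-integrable setT (fun x => (g1 x ^+ 2 + g2 x ^+ 2)%:E).
Proof.
case: v_X1 => _ [_ [_ [[_ ig1] [[_ ig2] _]]]].
by apply: eq_integrable (integrableD measurableT ig1 ig2) => //= x _; rewrite EFinD.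
Qed.

Let defect_integrable :
  mu.-integrable setT (fun x => ((1 - modv u1 u2 x ^+ 2) ^+ 2)%:E).
Proof. by case: v_X1 => _ [_ [_ [_ [_ []]]]]. Qed.

Lemma energy_density_integrable : mu.-integrable setT (EFin \o e).
Proof.
have := integrableD measurableT (integrableZl measurableT (2^-1) g_sqr_integrable)
  (integrableZl measurableT (4^-1) defect_integrable).
by apply: eq_integrable => //= x _; rewrite EFinD !EFinM.
Qed.

Lemma energy_Rintegral : energy u1 u2 g1 g2 = Rintegral mu setT e.
Proof.
rewrite /energy [RHS]RintegralD //; last first.
- exact: (integrableZl measurableT (4^-1) defect_integrable).
- exact: (integrableZl measurableT (2^-1) g_sqr_integrable).
by rewrite !RintegralZl.
Qed.

Lemma momentum_density_measurable : measurable_fun setT j.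
Proof.
case: v_X1 => _ [_ [_ [_ [_ [mdefect _]]]]].
apply: measurable_funM; last exact: weak_deriv_measurable dphi_weak_deriv.
rewrite (_ : (fun x => _) = -%R \o (fun x => 1 - modv u1 u2 x ^+ 2)).
  exact: measurableT_comp.
by apply/funext => x /=; rewrite opprB.
Qed.

Lemma ae_momentum_density_le {m : R} :
  0 < m -> (forall x, m <= modv u1 u2 x) ->
  {ae mu, forall x, setT x -> `|j x| <= Num.sqrt 2 / m * e x}.
Proof.
move=> m_gt0 le_m_modv.
case: v_X1 => _ [u1_wd [u2_wd _]].
apply: (filterS3 (ae_filter_ringOfSetsType mu) _
  (weak_deriv_ae_is_derive u1_wd) (weak_deriv_ae_is_derive u2_wd)
  (weak_deriv_ae_is_derive dphi_weak_deriv)) => x d1 d2 dp _.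
have := momentum_density_le (ltW m_gt0) (le_m_modv x)
  (modv_deriv_phase_sqr_le v_phase d1 d2 dp).
by rewrite mulrAC ler_pdivlMr // mulrC.
Qed.

Lemma inf_modv_mul_momentum_le_energy :
  inf [set modv u1 u2 x | x in [set: R]] * (Num.sqrt 2 * `|momentum u1 u2 dphi|)
    <= energy u1 u2 g1 g2.
Proof.
set m := inf _; set s := Num.sqrt 2.
have s_ge0 : 0 <= s := sqrtr_ge0 2.
have ss : s * s = 2 by rewrite -expr2 sqr_sqrtr ?ler0n.
have E_ge0 : 0 <= energy u1 u2 g1 g2.
  by rewrite energy_Rintegral Rintegral_ge0 // => x _; exact: energy_density_ge0.
have [m_le0|m_gt0] := leP m 0.
  by apply: le_trans E_ge0; rewrite mulr_le0_ge0 ?mulr_ge0.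
have le_m_modv x : m <= modv u1 u2 x.
  apply: ge_inf; last by exists x.
  by exists 0 => _ [y _ <-]; exact: sqrtr_ge0.
have scaled_e_ge0 x : setT x -> 0 <= s / m * e x.
  by move=> _; rewrite mulr_ge0 ?divr_ge0 ?energy_density_ge0 ?(ltW m_gt0).
have := ae_le_normr_Rintegral (mu := mu) measurableT momentum_density_measurable
  (integrableZl measurableT (s / m) energy_density_integrable) scaled_e_ge0
  (ae_momentum_density_le m_gt0 le_m_modv).
rewrite RintegralZl ?energy_density_integrable // -energy_Rintegral.
rewrite mulrAC ler_pdivlMr // => /(ler_wpM2l s_ge0) le_Im.
rewrite [s * (s * _)]mulrA ss in le_Im.
rewrite /momentum normrM (@ger0_norm _ 2^-1) ?invr_ge0 ?ler0n //.
nra.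
Qed.

End energy_momentum.

Theorem corollary3 (R : realType) (u1 u2 g1 g2 phi dphi : R -> R) :
  in_tX1 u1 u2 g1 g2 ->
  is_phase u1 u2 phi -> weak_deriv phi dphi ->
  let E := energy u1 u2 g1 g2 in
  let p := momentum u1 u2 dphi in
  (p != 0 -> inf [set modv u1 u2 x | x in [set: R]] <= E / (Num.sqrt 2 * `|p|)) /\
  (p != 0 -> 0 < 1 - E / (Num.sqrt 2 * `|p|) ->
     forall delta : R, 0 < delta -> delta < 1 - E / (Num.sqrt 2 * `|p|) ->
       exists x : R, delta <= 1 - modv u1 u2 x).
Proof.
move=> [v_X1 _] v_phase dphi_wd E p.
have inf_le : p != 0 -> inf [set modv u1 u2 x | x in [set: R]] <= E / (Num.sqrt 2 * `|p|).
  move=> p_neq0; rewrite ler_pdivlMr ?mulr_gt0 ?sqrtr_gt0 ?ltr0n ?normr_gt0 //.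
  exact: inf_modv_mul_momentum_le_energy v_X1 v_phase dphi_wd.
split=> // p_neq0 _ delta _ lt_delta.
have [_ [x _ <-] lt_x] : exists2 y, [set modv u1 u2 x | x in [set: R]] y & y < 1 - delta.
  by apply: inf_lt; [exists (modv u1 u2 0), 0 | apply: le_lt_trans (inf_le p_neq0) _; lra].
by exists x; lra.
Qed.
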